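(* For $s>0$ and $\kappa\ge1$, if $\theta_0\in[\phi(R)+\kappa\phi^{(s)},\frac\pi2)$, then $e^{\tilde{\mathfrak r}_0-\mathfrak r_0}=O\big(\varepsilon(\kappa,s)^{-1/\alpha}\big)$, with implicit constant depending only on $\alpha$.
   Context: Fixed constants $\nu>0$, $\alpha\in(\tfrac12,1]$; $R:=2\log(n/\nu)$, $n$ large. $\phi(r)\in[0,\pi/2]$ is defined for $r\in[0,R]$ by $\cos\phi(r)=\coth R\tanh(r/2)$ (decreasing bijection onto $[\phi(R),\pi/2]$). $\phi^{(s)}:=(s^{1/\alpha}/e^R)^{1/2}$, $\varepsilon(\kappa,s):=\frac{1+s}{(1+\kappa s^{1/(2\alpha)})^{2\alpha}}$. $\mathfrak r_0:=\phi^{-1}(\theta_0)$ and $\tilde{\mathfrak r}_0\in[\mathfrak r_0,R]$ is the unique value with $\frac{\log(\tanh(\alpha R/2)/\tanh(\alpha\tilde{\mathfrak r}_0/2))}{\log(\tanh(\alpha R/2)/\tanh(\alpha\mathfrak r_0/2))}=\varepsilon(\kappa,s)$. *)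

From Stdlib Require Import Reals.
Open Scope R_scope.

Definition tanhR (x : R) : R := (exp x - exp (- x)) / (exp x + exp (- x)).
Definition cothR (x : R) : R := (exp x + exp (- x)) / (exp x - exp (- x)).

Definition bigR (nu : R) (n : nat) : R := 2 * ln (INR n / nu).

Definition phi (Rr r : R) : R := acos (cothR Rr * tanhR (r / 2)).

Definition phis (alpha Rr s : R) : R := sqrt (Rpower s (1 / alpha) / exp Rr).

Definition epsk (alpha kappa s : R) : R :=
  (1 + s) / Rpower (1 + kappa * Rpower s (1 / (2 * alpha))) (2 * alpha).

Definition ratio (alpha Rr rt r0 : R) : R :=
  ln (tanhR (alpha * Rr / 2) / tanhR (alpha * rt / 2)) /
  ln (tanhR (alpha * Rr / 2) / tanhR (alpha * r0 / 2)).

(* Write w(x) := coth(x/2) = (e^x + 1)/(e^x - 1), so that tanh(x/2) = 1/w(x) and the ratio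
   defining r~0 is f(alpha r~0) / f(alpha r0) with f(x) := ln w(x) - ln w(alpha R) >= 0 on
   (0, alpha R].  The function x |-> f(x) e^x is nonincreasing on (0, +oo): as a function of
   w = w(x) it is (ln w - K)(w + 1)/(w - 1) with K := ln w(alpha R) >= 0, whose derivative has
   the sign of (w - 1/w)/2 - (ln w - K) >= 0.  Hence eps f(alpha r0) e^(alpha r~0) <= f(alpha r0) e^(alpha r0),
   i.e. e^(alpha (r~0 - r0)) <= 1/eps. *)

From Stdlib Require Import Reals Lra.
From Coquelicot Require Import Coquelicot.
Open Scope R_scope.

Lemma le_of_is_derive_nonneg (f df : R -> R) (x y : R) :
  x <= y -> (forall t, x <= t <= y -> is_derive f t (df t)) ->
  (forall t, x <= t <= y -> 0 <= df t) -> f x <= f y.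
Proof.
intros Hxy Hd Hpos.
destruct (MVT_gen f x y df) as [c [Hc Heq]];
  rewrite ?Rmin_left, ?Rmax_right in * by lra.
- intros t Ht; apply Hd; lra.
- intros t Ht. apply continuity_pt_filterlim, (ex_derive_continuous (V := R_NormedModule)).
  exists (df t); apply Hd; lra.
- assert (0 <= df c * (y - x)) by (apply Rmult_le_pos; [apply Hpos|]; lra).
  lra.
Qed.

Lemma exp_le_exp_of_le (x y : R) : x <= y -> exp x <= exp y.
Proof.
intros [Hlt | ->]; [now left; apply exp_increasing | apply Rle_refl].
Qed.

Lemma ln_le_half_sub_inv (w : R) : 1 <= w -> ln w <= (w - / w) / 2.
Proof.
intros Hw.
enough (H : (1 - / 1) / 2 - ln 1 <= (w - / w) / 2 - ln w)
  by (rewrite ln_1, Rinv_1 in H; lra).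
apply (le_of_is_derive_nonneg (fun w => (w - / w) / 2 - ln w)
                              (fun w => (w - 1) ^ 2 / (2 * w ^ 2))); [lra | |].
- intros t Ht. auto_derive; [lra | field; lra].
- intros t Ht. apply Rmult_le_pos; [apply pow2_ge_0 |].
  apply Rlt_le, Rinv_0_lt_compat; nra.
Qed.

Lemma ln_sub_mul_cayley_nondecreasing (K w1 w2 : R) : 0 <= K -> 1 < w1 <= w2 ->
  (ln w1 - K) * ((w1 + 1) / (w1 - 1)) <= (ln w2 - K) * ((w2 + 1) / (w2 - 1)).
Proof.
intros HK Hw.
apply (le_of_is_derive_nonneg (fun w => (ln w - K) * ((w + 1) / (w - 1)))
         (fun w => ((w - / w) - 2 * (ln w - K)) / (w - 1) ^ 2)); [lra | |].
- intros t Ht. auto_derive; [lra | field; lra].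
- intros t Ht. apply Rmult_le_pos.
  + pose proof (ln_le_half_sub_inv t). lra.
  + apply Rlt_le, Rinv_0_lt_compat; nra.
Qed.

Definition coth_half (x : R) : R := (exp x + 1) / (exp x - 1).

Lemma tanhR_half (x : R) : tanhR (x / 2) = / coth_half x.
Proof.
unfold tanhR, coth_half. rewrite Rinv_div, exp_Ropp.
assert (Hsq : exp x = exp (x / 2) * exp (x / 2)) by (rewrite <- exp_plus; f_equal; field).
pose proof (exp_pos (x / 2)).
rewrite Hsq. field; split; nra.
Qed.

Lemma exp_gt1 (x : R) : 0 < x -> 1 < exp x.
Proof. intros Hx. rewrite <- exp_0. now apply exp_increasing. Qed.

Lemma coth_half_gt1 (x : R) : 0 < x -> 1 < coth_half x.
Proof.
intros Hx. pose proof (exp_gt1 x Hx). unfold coth_half.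
apply Rlt_div_r; lra.
Qed.

Lemma coth_half_antitone (x y : R) : 0 < x <= y -> coth_half y <= coth_half x.
Proof.
intros Hxy. unfold coth_half.
pose proof (exp_gt1 x (proj1 Hxy)).
pose proof (exp_le_exp_of_le x y (proj2 Hxy)).
apply Rle_div_l; [lra |]. unfold Rdiv.
rewrite Rmult_assoc, (Rmult_comm (/ _)), <- Rmult_assoc.
apply Rle_div_r; lra.
Qed.

Lemma cayley_coth_half (x : R) : 0 < x ->
  (coth_half x + 1) / (coth_half x - 1) = exp x.
Proof. intros Hx. pose proof (exp_gt1 x Hx). unfold coth_half. field. lra. Qed.

Lemma ln_coth_half_sub_mul_exp_antitone (K x y : R) : 0 <= K -> 0 < x <= y ->
  (ln (coth_half y) - K) * exp y <= (ln (coth_half x) - K) * exp x.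
Proof.
intros HK Hxy.
rewrite <- (cayley_coth_half x), <- (cayley_coth_half y) by lra.
apply ln_sub_mul_cayley_nondecreasing; [exact HK |].
split; [apply coth_half_gt1; lra | now apply coth_half_antitone].
Qed.

Lemma ratio_mul_exp_le (alpha Rr rt r0 : R) : 0 < alpha -> 0 < r0 -> r0 <= rt <= Rr ->
  ratio alpha Rr rt r0 * exp (alpha * rt) <= exp (alpha * r0).
Proof.
intros Ha Hr0 Hr.
set (K := ln (coth_half (alpha * Rr))).
assert (Hcoth : forall r, 0 < r ->
          ln (tanhR (alpha * Rr / 2) / tanhR (alpha * r / 2)) = ln (coth_half (alpha * r)) - K).
{ intros r Hrpos.
  pose proof (coth_half_gt1 (alpha * r) ltac:(nra)).
  pose proof (coth_half_gt1 (alpha * Rr) ltac:(nra)).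
  rewrite !tanhR_half.
  replace (/ _ / / _) with (coth_half (alpha * r) / coth_half (alpha * Rr)) by (field; lra).
  rewrite ln_div; [reflexivity | lra | lra]. }
assert (HK : 0 <= K).
{ rewrite <- ln_1. apply ln_le; [lra |]. apply Rlt_le, coth_half_gt1. nra. }
assert (HK0 : K <= ln (coth_half (alpha * r0))).
{ apply ln_le; [pose proof (coth_half_gt1 (alpha * Rr)); nra |].
  apply coth_half_antitone; nra. }
assert (Hmono := ln_coth_half_sub_mul_exp_antitone K (alpha * r0) (alpha * rt) HK
                   ltac:(split; nra)).
unfold ratio. rewrite !Hcoth by lra.
destruct (Req_dec (ln (coth_half (alpha * r0)) - K) 0) as [Hden | Hden].
- (* only when r0 = R: the ratio is then 0 / 0, which Rocq evaluates to 0 *)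
  rewrite Hden, Rdiv_0_r, Rmult_0_l. apply Rlt_le, exp_pos.
- assert (0 < ln (coth_half (alpha * r0)) - K) by lra.
  apply (Rmult_le_reg_l (ln (coth_half (alpha * r0)) - K)); [lra |].
  replace (_ * (_ / _ * _)) with ((ln (coth_half (alpha * rt)) - K) * exp (alpha * rt))
    by (field; lra).
  exact Hmono.
Qed.

Lemma phi_at_0 (Rr : R) : phi Rr 0 = PI / 2.
Proof.
unfold phi, tanhR. rewrite Rdiv_0_l, Ropp_0, Rminus_diag, Rdiv_0_l, Rmult_0_r.
exact acos_0.
Qed.

Lemma epsk_pos (alpha kappa s : R) : -1 < s -> 0 < epsk alpha kappa s.
Proof. intros Hs. apply Rdiv_lt_0_compat; [lra | apply exp_pos]. Qed.

Lemma exp_sub_le_Rpower_of_mul_exp_le (alpha eps x y : R) : 0 < alpha -> 0 < eps ->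
  eps * exp (alpha * y) <= exp (alpha * x) -> exp (y - x) <= Rpower eps (- (1 / alpha)).
Proof.
intros Ha Heps Hle.
apply exp_le_exp_of_le.
assert (Hln : ln eps + alpha * y <= alpha * x).
{ rewrite <- (ln_exp (alpha * y)), <- (ln_exp (alpha * x)), <- ln_mult
    by (auto using exp_pos).
  apply ln_le; [apply Rmult_lt_0_compat; auto using exp_pos | exact Hle]. }
apply (Rmult_le_reg_l alpha); [exact Ha |].
replace (alpha * (- (1 / alpha) * ln eps)) with (- ln eps) by (field; lra).
lra.
Qed.

Theorem mainTheorem9 :
  forall alpha : R, 1 / 2 < alpha <= 1 ->
  exists C : R, 0 < C /\
  forall nu : R, 0 < nu ->
  exists N : nat, forall n : nat, (N <= n)%nat ->
  let Rr := bigR nu n in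
  forall (s kappa theta0 r0 rt : R),
    0 < s -> 1 <= kappa ->
    phi Rr Rr + kappa * phis alpha Rr s <= theta0 -> theta0 < PI / 2 ->
    (* r0 = phi^{-1}(theta0) *)
    0 <= r0 <= Rr -> phi Rr r0 = theta0 ->
    (* rt = r~0 : the value in [r0, R] solving the ratio equation *)
    r0 <= rt <= Rr -> ratio alpha Rr rt r0 = epsk alpha kappa s ->
    exp (rt - r0) <= C * Rpower (epsk alpha kappa s) (- (1 / alpha)).
Proof.
intros alpha Ha. exists 1. split; [lra |].
intros nu _. exists 0%nat. intros n _ Rr.
intros s kappa theta0 r0 rt Hs _ _ Htheta Hr0 Hphi Hrt Hratio.
assert (Hr0pos : 0 < r0).
{ destruct (proj1 Hr0) as [Hlt | Heq]; [exact Hlt |].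
  subst r0. rewrite phi_at_0 in Hphi. lra. }
rewrite Rmult_1_l.
apply exp_sub_le_Rpower_of_mul_exp_le; [lra | apply epsk_pos; lra |].
rewrite <- Hratio. apply ratio_mul_exp_le; lra.
Qed.
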